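(* Let $n$ be even and let $\nu_\mathcal{G}$ be the uniform measure on a finite set $\mathcal{G}$ of two-qudit unitaries (not necessarily closed under inverses), $\mathcal{G}^\dagger$ the set of inverses. Then for every positive integer $t$, $$g\big(\nu^{(n)}_{par}(\mathcal{G})*\nu^{(n)}_{par}(\mathcal{G}^\dagger),t\big)\ge\frac12\,g\big(\nu^{(n)}_{par}(\mathcal{G}\mathcal{G}^\dagger),t\big).$$
   Context: Consider $n$ qudits on a line, each of dimension $d$. For a probability measure $\eta$ on $\mathrm{U}(d^2)$, $\nu^{(n)}_{par}(\eta)$ is the probability measure on $\mathrm{U}(d^n)$ that with probability $1/2$ applies $U_{12}\otimes U_{34}\otimes\cdots\otimes U_{n-1,n}$ and with probability $1/2$ applies $U_{23}\otimes U_{45}\otimes\cdots\otimes U_{n-2,n-1}$ (identity on qudits $1$ and $n$), each $U_{ij}$ drawn independently from $\eta$ and acting on qudits $i,j$. $\nu^{(n)}_{par}(\mathcal{G})$, $\nu^{(n)}_{par}(\mathcal{G}^\dagger)$, $\nu^{(n)}_{par}(\mathcal{G}\mathcal{G}^\dagger)$ correspond to $\eta=\nu_\mathcal{G}$, the uniform measure on $\mathcal{G}^\dagger$, and $\nu_\mathcal{G}*\nu_{\mathcal{G}^\dagger}$. For a probability measure $\nu$ on $\mathrm{U}(D)$: $T_{\nu,t}=\int\mathrm{d}\nu(U)U^{\otimes t}\otimes\bar U^{\otimes t}$, $g(\nu,t)=1-\|T_{\nu,t}-T_{\mu,t}\|_\infty$ with $\mu$ the Haar measure, and $*$ is convolution.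 *)

From mathcomp Require Import all_boot all_algebra.
From mathcomp Require Import classical_sets reals complex.
Set Implicit Arguments. Unset Strict Implicit. Unset Printing Implicit Defensive.
Import GRing.Theory Num.Theory.
Local Open Scope ring_scope.

Section QuantumDefs.
Variable R : realType.
Local Notation C := (R[i]).

(* Linear operators on C^S, for a finite basis type S, as kernels S -> S -> C. *)
Definition Op (S : finType) := S -> S -> C.
Definition vec (S : finType) := S -> C.

Definition op_mul (S : finType) (A B : Op S) : Op S :=
  fun x y => \sum_(z : S) A x z * B z y.
Definition op_id (S : finType) : Op S := fun x y => (x == y)%:R.
Definition op_adj (S : finType) (A : Op S) : Op S := fun x y => (A y x)^*.
Definition op_sub (S : finType) (A B : Op S) : Op S := fun x y => A x y - B x y.
Definition op_apply (S : finType) (A : Op S) (v : vec S) : vec S :=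
  fun x => \sum_(y : S) A x y * v y.

Definition unitary (S : finType) (U : Op S) : Prop :=
  op_mul U (op_adj U) = @op_id S /\ op_mul (op_adj U) U = @op_id S.

Definition vnorm (S : finType) (v : vec S) : R :=
  Num.sqrt (\sum_(x : S) (complex.Re (v x) ^+ 2 + complex.Im (v x) ^+ 2)).
Definition opnorm (S : finType) (A : Op S) : R :=
  sup [set r : R | exists v : vec S, vnorm v <= 1 /\ r = vnorm (op_apply A v)].

(* Finitely supported probability measures on operators: lists of
   (weight, operator) pairs. *)
Definition fmeasure (S : finType) := seq (C * Op S).

(* Uniform measure on a finite set (given as a duplicate-free list). *)
Definition unif (S : finType) (G : seq (Op S)) : fmeasure S :=
  [seq ((size G)%:R^-1, g) | g <- G].

Definition conv (S : finType) (m1 m2 : fmeasure S) : fmeasure S :=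
  [seq (p.1 * q.1, op_mul p.2 q.2) | p <- m1, q <- m2].

(* Index type of the t-fold moment space (C^S)^{ot} o (C^S)^{ot}. *)
Definition tidx (S : finType) (t : nat) : finType :=
  ({ffun 'I_t -> S} * {ffun 'I_t -> S})%type.

Definition tens (S : finType) (t : nat) (U : Op S) : Op (tidx S t) :=
  fun a b => (\prod_(s < t) U (a.1 s) (b.1 s)) * (\prod_(s < t) (U (a.2 s) (b.2 s))^*).

Definition Tmom (S : finType) (t : nat) (m : fmeasure S) : Op (tidx S t) :=
  fun a b => \sum_(p <- m) p.1 * @tens S t p.2 a b.

(* T_{mu,t} for the Haar measure mu on U(S): the (unique) orthogonal projector
   onto the joint fixed space of all U^{ot} o conj(U)^{ot}, U unitary. *)
Definition haar_moment (S : finType) (t : nat) (P : Op (tidx S t)) : Prop :=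
  op_adj P = P /\ op_mul P P = P /\
  forall v : vec (tidx S t),
    op_apply P v = v <-> (forall U : Op S, unitary U -> op_apply (@tens S t U) v = v).

Definition gap (S : finType) (t : nat) (P : Op (tidx S t)) (m : fmeasure S) : R :=
  1 - opnorm (op_sub (@Tmom S t m) P).

Variables (n d : nat).

Definition qconf : finType := {ffun 'I_n -> 'I_d}.
Definition qq : finType := ('I_d * 'I_d)%type.  (* basis of a two-qudit system *)

(* right neighbour of site i (i itself if i is the last site) *)
Definition nextn (i : 'I_n) : 'I_n := insubd i i.+1.

(* 0-based left ends of the pairs of the two layers:
   layer A: (0,1),(2,3),...,   layer B: (1,2),(3,4),...,(n-3,n-2). *)
Definition pairA : finType := {i : 'I_n | ~~ odd i && (i.+1 < n)%N}.
Definition pairB : finType := {i : 'I_n | odd i && (i.+1 < n)%N}.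
(* sites untouched by layer B (qudits 1 and n in 1-based numbering) *)
Definition idleB (i : 'I_n) : bool := ~~ [exists p : pairB, (val p == i) || (nextn (val p) == i)].

Definition layerA (u : pairA -> Op qq) : Op qconf :=
  fun x y => \prod_(p : pairA) u p (x (val p), x (nextn (val p))) (y (val p), y (nextn (val p))).
Definition layerB (u : pairB -> Op qq) : Op qconf :=
  fun x y => (\prod_(p : pairB) u p (x (val p), x (nextn (val p))) (y (val p), y (nextn (val p))))
           * \prod_(i : 'I_n | idleB i) (x i == y i)%:R.

(* nu_par^{(n)}(eta): with prob. 1/2 layer A, with prob. 1/2 layer B, each gate
   drawn independently from eta. *)
Definition nu_par (eta : fmeasure qq) : fmeasure qconf :=
  [seq (2^-1 * \prod_(p : pairA) (tnth (in_tuple eta) (f p)).1,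
        layerA (fun p => (tnth (in_tuple eta) (f p)).2))
  | f : {ffun pairA -> 'I_(size eta)} <- enum {ffun pairA -> 'I_(size eta)}] ++
  [seq (2^-1 * \prod_(p : pairB) (tnth (in_tuple eta) (f p)).1,
        layerB (fun p => (tnth (in_tuple eta) (f p)).2))
  | f : {ffun pairB -> 'I_(size eta)} <- enum {ffun pairB -> 'I_(size eta)}].

End QuantumDefs.

From mathcomp Require Import all_boot all_algebra.
From mathcomp Require Import boolp reals complex.
From mathcomp Require Import ring lra.
Import order.Order.TTheory GRing.Theory Num.Theory.
Set Implicit Arguments. Unset Strict Implicit. Unset Printing Implicit Defensive.
Local Open Scope ring_scope.

(* Let A, B (resp. A', B') be the t-th moment operators of the two brickwork layers with
   gates drawn uniformly from G (resp. from G^dagger).  A layer is a tensor product of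
   independent gates, so its moment operator is the tensor product of the gate moments;
   hence the moment of a layer is multiplicative under convolution of the gate measures,
   and the two sides of the theorem involve T = (A + B)/2 (A' + B')/2 and
   T' = (A A' + B B')/2.  Every moment operator of a probability measure on unitaries is a
   contraction fixing the range of the Haar projector P, so
     T - P = (T' - P)/2 + A B' (1 - P)/4 + B A' (1 - P)/4,
   and the last two terms have norm at most 1/4 because 1 - P is an orthogonal projector.
   Thus ||T - P|| <= ||T' - P||/2 + 1/2, which is the claimed inequality between gaps. *)

Section EuclideanNorm.
Variable R : realType.
Local Notation C := R[i].
Local Notation Re := complex.Re.
Local Notation Im := complex.Im.
Local Notation "x %:C" := (real_complex R x).

Lemma sqr_le_of_quadratic_ge0 (a b x : R) : 0 <= b ->
  (forall l, 0 <= a - 2 * l * x + l ^+ 2 * b) -> x ^+ 2 <= a * b.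
Proof.
move=> b_ge0 q; have [b0|b_neq0] := eqVneq b 0.
  have [->|x_neq0] := eqVneq x 0; first by rewrite b0 expr0n mulr0.
  have := q ((a + 1) / (2 * x)).
  suff -> : a - 2 * ((a + 1) / (2 * x)) * x + ((a + 1) / (2 * x)) ^+ 2 * b = -1.
    by rewrite oppr_ge0 ler10.
  by rewrite b0; field; rewrite x_neq0.
have b_gt0 : 0 < b by rewrite lt0r b_neq0.
have := q (x / b).
suff -> : a - 2 * (x / b) * x + (x / b) ^+ 2 * b = (a * b - x ^+ 2) / b.
  by rewrite pmulr_lge0 ?invr_gt0 // subr_ge0.
by field.
Qed.

Definition sqnorm (S : finType) (v : vec R S) : R :=
  \sum_x (Re (v x) ^+ 2 + Im (v x) ^+ 2).
Definition dotv (S : finType) (u v : vec R S) : C := \sum_x (u x)^* * v x.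
Definition redot (S : finType) (u v : vec R S) : R :=
  \sum_x (Re (u x) * Re (v x) + Im (u x) * Im (v x)).

Variable S : finType.
Implicit Types (u v : vec R S).

Lemma sqnorm_ge0 v : 0 <= sqnorm v.
Proof. by apply: sumr_ge0 => x _; rewrite addr_ge0 ?sqr_ge0. Qed.

Lemma vnormE v : vnorm v = Num.sqrt (sqnorm v).
Proof. by []. Qed.

Lemma vnorm_ge0 v : 0 <= vnorm v.
Proof. exact: sqrtr_ge0. Qed.

Lemma sqnorm_dotv v : (sqnorm v)%:C = dotv v v.
Proof.
rewrite rmorph_sum; apply: eq_bigr => x _ /=.
by rewrite add_Re2_Im2 normCK mulrC.
Qed.

Lemma vnorm_dotv u v : dotv u u = dotv v v -> vnorm u = vnorm v.
Proof. by rewrite -!sqnorm_dotv => /complexI; rewrite !vnormE => ->. Qed.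

Lemma sqnormD u v :
  sqnorm (fun x => u x + v x) = sqnorm u + sqnorm v + 2 * redot u v.
Proof.
rewrite /sqnorm /redot mulr_sumr -!big_split; apply: eq_bigr => x _ /=.
by case: (u x) (v x) => [a b] [c e] /=; ring.
Qed.

Lemma redot_le_vnorm u v : redot u v <= vnorm u * vnorm v.
Proof.
apply: le_trans (ler_norm _) _.
rewrite !vnormE -sqrtrM ?sqnorm_ge0 // -sqrtr_sqr ler_sqrt ?mulr_ge0 ?sqnorm_ge0 //.
apply: sqr_le_of_quadratic_ge0 (sqnorm_ge0 v) _ => l.
suff -> : sqnorm u - 2 * l * redot u v + l ^+ 2 * sqnorm v =
          \sum_x ((Re (u x) - l * Re (v x)) ^+ 2 + (Im (u x) - l * Im (v x)) ^+ 2).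
  by apply: sumr_ge0 => x _; rewrite addr_ge0 ?sqr_ge0.
rewrite /sqnorm /redot !mulr_sumr -sumrN -!big_split /=.
by apply: eq_bigr => x _; ring.
Qed.

Lemma redot_dotv u v : (2 * redot u v)%:C = dotv u v + dotv v u.
Proof.
rewrite rmorphM rmorph_sum /= /dotv -big_split mulr_sumr /=; apply: eq_bigr => x _.
case: (u x) (v x) => [a b] [c e] /=; simpc.
by congr (_ +i* _)%C; ring.
Qed.

Lemma vnormD u v : vnorm (fun x => u x + v x) <= vnorm u + vnorm v.
Proof.
have := redot_le_vnorm u v.
rewrite -(ger0_norm (addr_ge0 (vnorm_ge0 u) (vnorm_ge0 v))) !vnormE -sqrtr_sqr.
rewrite ler_sqrt ?sqr_ge0 // sqnormD sqrrD !sqr_sqrtr ?sqnorm_ge0 // mulr2n.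
by set a := sqnorm u; set b := sqnorm v; lra.
Qed.

Definition cabs (c : C) : R := Num.sqrt (Re c ^+ 2 + Im c ^+ 2).

Lemma vnormZ (c : C) v : vnorm (fun x => c * v x) = cabs c * vnorm v.
Proof.
rewrite !vnormE /cabs -sqrtrM ?addr_ge0 ?sqr_ge0 //; congr Num.sqrt.
rewrite /sqnorm mulr_sumr; apply: eq_bigr => x _ /=.
by case: c (v x) => [a b] [p q] /=; ring.
Qed.

Lemma ger0_cabs (c : C) : 0 <= c -> (cabs c)%:C = c.
Proof.
case: c => a b; rewrite lecE /cabs /= => /andP[/eqP -> a_ge0].
by rewrite expr0n addr0 sqrtr_sqr ger0_norm.
Qed.

Lemma ger0_cabsR (r : R) : 0 <= r -> cabs r%:C = r.
Proof. by move=> r_ge0; apply: complexI; rewrite ger0_cabs // ler0c. Qed.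

Lemma vnormZ_ger0 (r : R) v : 0 <= r -> vnorm (fun x => r%:C * v x) = r * vnorm v.
Proof. by move=> r_ge0; rewrite vnormZ ger0_cabsR. Qed.

Lemma cabs_le_vnorm v x : cabs (v x) <= vnorm v.
Proof.
rewrite ler_sqrt ?sqnorm_ge0 // /sqnorm (bigD1 x) //= lerDl.
by apply: sumr_ge0 => y _; rewrite addr_ge0 ?sqr_ge0.
Qed.

Lemma vnorm0 : vnorm (fun _ : S => 0 : C) = 0.
Proof. by rewrite vnormE /sqnorm big1 ?sqrtr0 // => x _; rewrite expr0n addr0. Qed.

Lemma vnorm_sum (I : Type) (r : seq I) (f : I -> vec R S) :
  vnorm (fun x => \sum_(i <- r) f i x) <= \sum_(i <- r) vnorm (f i).
Proof.
elim: r => [|i r IH].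
  by under eq_fun do rewrite big_nil; rewrite vnorm0 big_nil.
under eq_fun do rewrite big_cons.
by rewrite big_cons; apply: le_trans (vnormD _ _) _; rewrite lerD2l.
Qed.

End EuclideanNorm.

Section Operators.
Variables (R : realType) (S : finType).
Local Notation C := R[i].
Local Notation "x %:C" := (real_complex R x).
Implicit Types (A B U : Op R S) (u v w : vec R S).

Lemma op_apply_mul A B v : op_apply (op_mul A B) v = op_apply A (op_apply B v).
Proof.
apply: funext => x; rewrite /op_apply /op_mul.
under eq_bigr do rewrite mulr_suml.
rewrite exchange_big /=; apply: eq_bigr => z _.
by rewrite mulr_sumr; apply: eq_bigr => y _; rewrite mulrA.
Qed.

Lemma op_applyB A u v :
  op_apply A (fun x => u x - v x) = fun x => op_apply A u x - op_apply A v x.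
Proof.
by apply: funext => x; rewrite /op_apply -sumrB; apply: eq_bigr => y _; rewrite mulrBr.
Qed.

Lemma op_apply_comb A (a b : C) u w :
  op_apply A (fun y => a * u y + b * w y) = fun x => a * op_apply A u x + b * op_apply A w x.
Proof.
apply: funext => x; rewrite /op_apply !mulr_sumr -big_split /=.
by apply: eq_bigr => y _; rewrite mulrDr !(mulrCA (A x y)).
Qed.

Lemma op_apply_sub A B v :
  op_apply (op_sub A B) v = fun x => op_apply A v x - op_apply B v x.
Proof.
by apply: funext => x; rewrite /op_apply -sumrB; apply: eq_bigr => y _; rewrite mulrBl.
Qed.

Lemma op_adjK A : op_adj (op_adj A) = A.
Proof. by apply: funext => x; apply: funext => y; rewrite /op_adj conjCK. Qed.

Lemma dotv_adj A u w : dotv (op_apply A u) w = dotv u (op_apply (op_adj A) w).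
Proof.
rewrite /dotv /op_apply /op_adj.
under eq_bigr do rewrite rmorph_sum mulr_suml.
rewrite exchange_big /=; apply: eq_bigr => y _.
rewrite mulr_sumr; apply: eq_bigr => x _.
by rewrite rmorphM /= mulrCA mulrA.
Qed.

Lemma conj_dotv u w : (dotv u w)^* = dotv w u.
Proof.
by rewrite /dotv rmorph_sum; apply: eq_bigr => x _; rewrite rmorphM /= conjCK mulrC.
Qed.

Lemma sum_delta (y : S) (F : S -> C) : \sum_z (y == z)%:R * F z = F y.
Proof.
rewrite (bigD1 y) //= eqxx mul1r big1 ?addr0 // => z /negPf.
by rewrite eq_sym => ->; rewrite mul0r.
Qed.

Lemma op_apply_id v : op_apply (@op_id R S) v = v.
Proof. by apply: funext => x; apply: sum_delta. Qed.

Lemma vnorm_unitary U v : unitary U -> vnorm (op_apply U v) = vnorm v.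
Proof.
by case=> _ UU; apply: vnorm_dotv; rewrite dotv_adj -op_apply_mul UU op_apply_id.
Qed.

Lemma unitary_adj U : unitary U -> unitary (op_adj U).
Proof. by case=> U1 U2; split; rewrite op_adjK. Qed.

Lemma opnorm_bounded A :
  exists K, forall v, vnorm v <= 1 -> vnorm (op_apply A v) <= K.
Proof.
exists (\sum_y vnorm (fun x => A x y)) => v v_le1.
have -> : op_apply A v = fun x => \sum_y v y * A x y.
  by apply: funext => x; apply: eq_bigr => y _; rewrite mulrC.
apply: le_trans (vnorm_sum _ _) _; apply: ler_sum => y _.
rewrite vnormZ ler_piMl ?vnorm_ge0 //.
exact: le_trans (cabs_le_vnorm v y) v_le1.
Qed.

Lemma opnorm_ub A v : vnorm v <= 1 -> vnorm (op_apply A v) <= opnorm A.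
Proof.
move=> v_le1; apply: sup_upper_bound; last by exists v.
split; first by exists (vnorm (op_apply A v)), v.
by have [K AK] := opnorm_bounded A; exists K => _ [w [w_le1 ->]]; apply: AK.
Qed.

Lemma opnorm_le A b :
  (forall v, vnorm v <= 1 -> vnorm (op_apply A v) <= b) -> opnorm A <= b.
Proof.
move=> Ab; apply: ge_sup; last by move=> _ [w [w_le1 ->]]; apply: Ab.
by exists (vnorm (op_apply A (fun _ => 0))), (fun _ => 0); rewrite vnorm0 ler01.
Qed.

Definition contraction A : Prop := forall v, vnorm (op_apply A v) <= vnorm v.

Definition fixes_range (P A : Op R S) : Prop :=
  forall v, op_apply A (op_apply P v) = op_apply P v.

Definition orth_proj (P : Op R S) : Prop := op_adj P = P /\ op_mul P P = P.

Definition op_avg A B : Op R S := fun x y => 2^-1 * A x y + 2^-1 * B x y.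

Lemma op_apply_avg A B v :
  op_apply (op_avg A B) v = fun x => 2^-1 * op_apply A v x + 2^-1 * op_apply B v x.
Proof.
apply: funext => x; rewrite /op_apply !mulr_sumr -big_split /=.
by apply: eq_bigr => y _; rewrite mulrDl !mulrA.
Qed.

Lemma vnorm_sub_proj P v : orth_proj P -> vnorm (fun x => v x - op_apply P v x) <= vnorm v.
Proof.
case=> P_adj PP; set w := op_apply P v; set u := fun x => v x - w x.
have Pu0 : op_apply P u = fun _ => 0.
  by rewrite op_applyB /w -op_apply_mul PP; apply: funext => x; rewrite subrr.
have wu0 : dotv w u = 0.
  by rewrite /w dotv_adj P_adj Pu0 /dotv big1 // => x _; rewrite mulr0.
have redot0 : 2 * redot w u = 0.
  by apply: complexI; rewrite redot_dotv wu0 -conj_dotv wu0 conjC0 addr0 rmorph0.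
have -> : v = fun x => w x + u x by apply: funext => x; rewrite subrKC.
by rewrite !vnormE ler_sqrt ?sqnorm_ge0 // sqnormD redot0 addr0 lerDr sqnorm_ge0.
Qed.

Lemma vnorm_mul_sub_proj P A B v :
  orth_proj P -> contraction A -> contraction B -> fixes_range P A -> fixes_range P B ->
  vnorm (fun x => op_apply A (op_apply B v) x - op_apply P v x) <= vnorm v.
Proof.
move=> P_proj A_contr B_contr A_fix B_fix.
rewrite (_ : (fun x => _) = op_apply A (op_apply B (fun x => v x - op_apply P v x))).
  apply: le_trans (A_contr _) _; apply: le_trans (B_contr _) _.
  exact: vnorm_sub_proj.
by rewrite !op_applyB B_fix A_fix.
Qed.

Section AverageOfProducts.
Variables (P A1 B1 A2 B2 : Op R S).
Hypothesis P_proj : orth_proj P.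
Hypotheses (A1_contr : contraction A1) (B1_contr : contraction B1).
Hypotheses (A2_contr : contraction A2) (B2_contr : contraction B2).
Hypotheses (A1_fix : fixes_range P A1) (B1_fix : fixes_range P B1).
Hypotheses (A2_fix : fixes_range P A2) (B2_fix : fixes_range P B2).

Lemma opnorm_avg_mul :
  opnorm (op_sub (op_mul (op_avg A1 B1) (op_avg A2 B2)) P) <=
  2^-1 * opnorm (op_sub (op_avg (op_mul A1 A2) (op_mul B1 B2)) P) + 2^-1.
Proof.
apply: opnorm_le => v v_le1.
set Y := op_sub (op_avg _ _) P.
set w1 := fun x => op_apply A1 (op_apply B2 v) x - op_apply P v x.
set w2 := fun x => op_apply B1 (op_apply A2 v) x - op_apply P v x.
have -> : op_apply (op_sub (op_mul (op_avg A1 B1) (op_avg A2 B2)) P) v =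
    fun x => (2^-1)%:C * op_apply Y v x + ((4^-1)%:C * w1 x + (4^-1)%:C * w2 x).
  apply: funext => x.
  rewrite /Y !op_apply_sub !op_apply_mul !op_apply_avg !op_apply_comb !op_apply_mul.
  rewrite /w1 /w2 !fmorphV !rmorph_nat.
  by field; rewrite ?pnatr_eq0.
have Y_le := opnorm_ub Y v_le1.
have w1_le : vnorm w1 <= 1 by apply: le_trans v_le1; apply: vnorm_mul_sub_proj.
have w2_le : vnorm w2 <= 1 by apply: le_trans v_le1; apply: vnorm_mul_sub_proj.
apply: le_trans (vnormD _ _) _; rewrite vnormZ_ger0 ?invr_ge0 ?ler0n //.
apply: le_trans (lerD (lexx _) (vnormD _ _)) _.
rewrite !vnormZ_ger0 ?invr_ge0 ?ler0n //; lra.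
Qed.

End AverageOfProducts.

End Operators.

Lemma prod_eq_ffun (Rg : comPzSemiRingType) (K : finType) (W : eqType)
    (f g : {ffun K -> W}) :
  \prod_k ((f k == g k)%:R : Rg) = (f == g)%:R.
Proof.
have [->|/eqP f_neq_g] := eqVneq f g; first by rewrite big1 // => k _; rewrite eqxx.
have [k /negPf fg_k] : exists k, f k != g k.
  apply/existsP; apply: contra_notT f_neq_g => /existsPn fg.
  by apply/ffunP => k; apply/eqP/negPn.
by rewrite (bigD1 k) //= fg_k mul0r.
Qed.

Section TensorPower.
Variables (R : realType) (S : finType) (t : nat).
Local Notation tens := (@tens R S t).
Local Notation Tmom := (@Tmom R S t).

Lemma tens_mul (U V : Op R S) : op_mul (tens U) (tens V) = tens (op_mul U V).
Proof.
apply: funext => a; apply: funext => b; rewrite /tens /op_mul.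
under [X in _ = _ * X]eq_bigr do rewrite rmorph_sum.
rewrite !bigA_distr_bigA /= big_distrlr /= pair_big /=.
apply: eq_bigr => -[c1 c2] _ /=.
by rewrite mulrACA -!big_split /=; apply: eq_bigr => s _; rewrite rmorphM.
Qed.

Lemma tens_adj (U : Op R S) : op_adj (tens U) = tens (op_adj U).
Proof.
by apply: funext => a; apply: funext => b; rewrite /tens /op_adj rmorphM !rmorph_prod.
Qed.

Lemma tens_id : tens (@op_id R S) = @op_id R (tidx S t).
Proof.
apply: funext => -[a1 a2]; apply: funext => -[b1 b2].
rewrite /tens /op_id prod_eq_ffun; under eq_bigr do rewrite conjC_nat.
by rewrite prod_eq_ffun -natrM mulnb.
Qed.

Lemma tens_unitary (U : Op R S) : unitary U -> unitary (tens U).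
Proof. by case=> U1 U2; split; rewrite tens_adj tens_mul ?U1 ?U2 tens_id. Qed.

Lemma Tmom_apply (m : fmeasure R S) v x :
  op_apply (Tmom m) v x = \sum_(p <- m) p.1 * op_apply (tens p.2) v x.
Proof.
rewrite /op_apply /Tmom; under eq_bigr do rewrite mulr_suml.
rewrite exchange_big /=; apply: eq_bigr => p _.
by rewrite mulr_sumr; apply: eq_bigr => y _; rewrite mulrA.
Qed.

Lemma Tmom_conv (m1 m2 : fmeasure R S) :
  Tmom (conv m1 m2) = op_mul (Tmom m1) (Tmom m2).
Proof.
apply: funext => a; apply: funext => b.
rewrite /Tmom /conv big_allpairs_dep /op_mul /=.
under [RHS]eq_bigr do rewrite mulr_suml.
rewrite [RHS]exchange_big /=; apply: eq_bigr => p _.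
under [RHS]eq_bigr do rewrite mulr_sumr.
rewrite [RHS]exchange_big /=; apply: eq_bigr => q _.
by rewrite -tens_mul /op_mul mulr_sumr; apply: eq_bigr => c _; rewrite mulrACA.
Qed.

Definition scale_measure (c : R[i]) (m : fmeasure R S) : fmeasure R S :=
  [seq (c * p.1, p.2) | p <- m].

Lemma Tmom_avg (m1 m2 : fmeasure R S) :
  Tmom (scale_measure 2^-1 m1 ++ scale_measure 2^-1 m2) = op_avg (Tmom m1) (Tmom m2).
Proof.
apply: funext => a; apply: funext => b.
rewrite /Tmom /op_avg big_cat /= !big_map !mulr_sumr.
by congr (_ + _); apply: eq_bigr => p _; apply: esym (mulrA _ _ _).
Qed.

End TensorPower.

Lemma eq_big_In (I : Type) (V : nmodType) (r : seq I) (F G : I -> V) :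
  (forall i, List.In i r -> F i = G i) -> \sum_(i <- r) F i = \sum_(i <- r) G i.
Proof.
elim: r => [|i r IH] FG; first by rewrite !big_nil.
by rewrite !big_cons FG ?IH //=; [move=> j rj; apply: FG; right | left].
Qed.

Section MomentOperators.
Variables (R : realType) (S : finType) (t : nat).
Local Notation Tmom := (@Tmom R S t).

Definition unitary_prob (m : fmeasure R S) : Prop :=
  (forall p, List.In p m -> 0 <= p.1 /\ unitary p.2) /\ \sum_(p <- m) p.1 = 1.

Lemma unif_prob (G : seq (Op R S)) :
  G <> [::] -> (forall g, List.In g G -> unitary g) -> unitary_prob (unif G).
Proof.
move=> G_neq0 G_unitary; split.
  move=> _ /List.in_map_iff[g [<- Gg]].
  by rewrite invr_ge0 ler0n; split=> //; apply: G_unitary.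
rewrite big_map big_const_seq count_predT iter_addr_0 -[LHS]mulr_natr mulVf //.
by rewrite pnatr_eq0 size_eq0; apply/eqP.
Qed.

Lemma Tmom_contraction (m : fmeasure R S) : unitary_prob m -> contraction (Tmom m).
Proof.
case=> m_unitary m_sum1 v.
have sum_cabs : \sum_(p <- m) cabs p.1 = 1.
  apply: complexI; rewrite rmorph_sum rmorph1 -m_sum1.
  by apply: eq_big_In => p /m_unitary[p_ge0 _]; apply: ger0_cabs.
rewrite (_ : op_apply _ v = fun x => \sum_(p <- m) p.1 * op_apply (@tens R S t p.2) v x).
  apply: le_trans (vnorm_sum _ _) _.
  rewrite (eq_big_In (G := fun p => cabs p.1 * vnorm v)) -?mulr_suml ?sum_cabs ?mul1r //.
  by move=> p /m_unitary[_ p_unitary]; rewrite vnormZ vnorm_unitary //; apply: tens_unitary.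
by apply: funext => x; apply: Tmom_apply.
Qed.

Variable P : Op R (tidx S t).
Hypothesis P_haar : haar_moment P.

Lemma haar_moment_orth_proj : orth_proj P.
Proof. by case: P_haar => P_adj [PP _]. Qed.

Lemma haar_moment_fixes_range (U : Op R S) : unitary U -> fixes_range P (@tens R S t U).
Proof.
case: P_haar => _ [PP P_fix] U_unitary v.
by apply: (P_fix _).1 => //; rewrite -op_apply_mul PP.
Qed.

Lemma Tmom_fixes_range (m : fmeasure R S) : unitary_prob m -> fixes_range P (Tmom m).
Proof.
case=> m_unitary m_sum1 v; apply: funext => x; rewrite Tmom_apply.
rewrite (eq_big_In (G := fun p => p.1 * op_apply P v x)) -?mulr_suml ?m_sum1 ?mul1r //.
by move=> p /m_unitary[_ /haar_moment_fixes_range ->].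
Qed.

End MomentOperators.

(* With r identifying the basis S with W^K * V, this is (\otimes_k F k) \otimes Id_V. *)
Definition tensor_op (R : realType) (S K W V : finType) (r : S -> {ffun K -> W} * V)
    (F : K -> Op R W) : Op R S :=
  fun x y => (\prod_k F k ((r x).1 k) ((r y).1 k)) * ((r x).2 == (r y).2)%:R.

(* Reorders the 2t tensor factors C^S = (C^W)^{\otimes K} \otimes C^V of the moment space into
   K moment spaces of W and one of V. *)
Definition regroup (S K W V : finType) (r : S -> {ffun K -> W} * V) (t : nat)
    (a : tidx S t) : {ffun K -> tidx W t} * tidx V t :=
  ([ffun k => ([ffun s => (r (a.1 s)).1 k], [ffun s => (r (a.2 s)).1 k])],
   ([ffun s => (r (a.1 s)).2], [ffun s => (r (a.2 s)).2])).
Arguments regroup {S K W V} r t a.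

Lemma In_nth (T : Type) (x0 : T) (e : seq T) i : (i < size e)%N -> List.In (nth x0 e i) e.
Proof. by elim: e i => [|x e IH] [|i] //= lt_i_e; [left | right; apply: IH]. Qed.

Lemma In_tnth (T : Type) (e : seq T) (i : 'I_(size e)) : List.In (tnth (in_tuple e) i) e.
Proof. by rewrite (tnth_nth (tnth (in_tuple e) i)); apply: In_nth. Qed.

Section TensorProductOperators.
Variables (R : realType) (S K W V : finType) (r : S -> {ffun K -> W} * V).

Lemma tensor_op_adj (F : K -> Op R W) :
  op_adj (tensor_op r F) = tensor_op r (fun k => op_adj (F k)).
Proof.
apply: funext => x; apply: funext => y.
by rewrite /op_adj /tensor_op rmorphM rmorph_prod /= conjC_nat eq_sym.
Qed.

Lemma tens_tensor_op t (F : K -> Op R W) :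
  @tens R S t (tensor_op r F) = tensor_op (regroup r t) (fun k => @tens R W t (F k)).
Proof.
apply: funext => a; apply: funext => b.
rewrite /tens /tensor_op /regroup /= !big_split /=.
under [X in _ * X = _]eq_bigr do rewrite rmorphM rmorph_prod /= conjC_nat.
rewrite big_split /=.
rewrite (exchange_big _ _ _ _ _ (fun s k => F k _ _)).
rewrite (exchange_big _ _ _ _ _ (fun s k => (F k _ _)^*)).
rewrite xpair_eqE -mulnb natrM.
rewrite -(prod_eq_ffun _ [ffun s => (r (a.1 s)).2] [ffun s => (r (b.1 s)).2]).
rewrite -(prod_eq_ffun _ [ffun s => (r (a.2 s)).2] [ffun s => (r (b.2 s)).2]).
rewrite mulrACA -big_split /= -[X in _ = X * _]big_split /=.
congr (_ * _); last by congr (_ * _); apply: eq_bigr => s _; rewrite !ffunE.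
apply: eq_bigr => k _; rewrite !ffunE /=.
by congr (_ * _); apply: eq_bigr => s _; rewrite !ffunE.
Qed.

Hypothesis r_bij : bijective r.

Lemma tensor_op_mul (F G : K -> Op R W) :
  op_mul (tensor_op r F) (tensor_op r G) = tensor_op r (fun k => op_mul (F k) (G k)).
Proof.
apply: funext => x; apply: funext => y.
have [ri rK riK] := r_bij.
rewrite /op_mul /tensor_op (reindex ri (onW_bij _ (Bijective riK rK))) /=.
under eq_bigr do rewrite riK.
rewrite -(pair_big xpredT xpredT (fun (g : {ffun K -> W}) (v : V) =>
  ((\prod_k F k ((r x).1 k) (g k)) * ((r x).2 == v)%:R) *
  ((\prod_k G k (g k) ((r y).1 k)) * (v == (r y).2)%:R))) /=.
under eq_bigr do under eq_bigr do rewrite mulrACA -big_split.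
by rewrite -big_distrlr /= sum_delta bigA_distr_bigA.
Qed.

Lemma tensor_op_id : tensor_op r (fun _ => @op_id R W) = @op_id R S.
Proof.
apply: funext => x; apply: funext => y.
rewrite /tensor_op /op_id prod_eq_ffun -natrM mulnb -xpair_eqE -!surjective_pairing.
by rewrite (inj_eq (bij_inj r_bij)).
Qed.

Lemma tensor_op_unitary (F : K -> Op R W) :
  (forall k, unitary (F k)) -> unitary (tensor_op r F).
Proof.
move=> F_unitary; split; rewrite tensor_op_adj tensor_op_mul -[RHS]tensor_op_id;
  by congr (tensor_op r _); apply: funext => k; case: (F_unitary k).
Qed.

Lemma regroup_bij t : bijective (regroup r t).
Proof.
have [ri rK riK] := r_bij.
pose ungroup (y : {ffun K -> tidx W t} * tidx V t) : tidx S t :=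
  ([ffun s => ri ([ffun k => (y.1 k).1 s], y.2.1 s)],
   [ffun s => ri ([ffun k => (y.1 k).2 s], y.2.2 s)]).
exists ungroup.
  move=> [a1 a2]; rewrite /ungroup /regroup /=.
  by congr (_, _); apply/ffunP => s; rewrite !ffunE -[RHS]rK [r _]surjective_pairing;
    congr (ri (_, _)); apply/ffunP => k; rewrite !ffunE.
move=> [G [h1 h2]]; rewrite /ungroup /regroup /=.
congr (_, (_, _)); last 2 first.
- by apply/ffunP => s; rewrite !ffunE riK.
- by apply/ffunP => s; rewrite !ffunE riK.
apply/ffunP => k; rewrite ffunE [G k]surjective_pairing.
by congr (_, _); apply/ffunP => s; rewrite !ffunE riK ffunE.
Qed.

(* The law of the tensor product of |K| independent gates drawn from e. *)
Definition layer_measure (e : fmeasure R W) : fmeasure R S :=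
  [seq (\prod_k (tnth (in_tuple e) (f k)).1,
        tensor_op r (fun k => (tnth (in_tuple e) (f k)).2))
  | f : {ffun K -> 'I_(size e)} <- enum {ffun K -> 'I_(size e)}].

Lemma Tmom_layer_measure t (e : fmeasure R W) :
  @Tmom R S t (layer_measure e) = tensor_op (regroup r t) (fun _ => @Tmom R W t e).
Proof.
apply: funext => a; apply: funext => b.
rewrite /Tmom big_map big_enum /=.
under eq_bigr do rewrite tens_tensor_op /tensor_op mulrA -big_split /=.
rewrite -mulr_suml /tensor_op; congr (_ * _).
under [RHS]eq_bigr do rewrite (big_tnth _ _ e xpredT).
by rewrite bigA_distr_bigA; apply: eq_bigl.
Qed.

Lemma layer_measure_prob (e : fmeasure R W) : unitary_prob e -> unitary_prob (layer_measure e).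
Proof.
case=> e_unitary e_sum1.
have e_tnth (i : 'I_(size e)) := e_unitary _ (In_tnth i).
split.
  move=> _ /List.in_map_iff[f [<- _]] /=; split.
    by apply: prodr_ge0 => k _; case: (e_tnth (f k)).
  by apply: tensor_op_unitary => k; case: (e_tnth (f k)).
rewrite big_map big_enum /= (eq_bigl xpredT) //.
rewrite -(bigA_distr_bigA (fun k (j : 'I_(size e)) => (tnth (in_tuple e) j).1)) big1 // => k _.
by rewrite -(big_tnth _ _ e xpredT (fun p => p.1)).
Qed.

End TensorProductOperators.

Lemma Tmom_layer_conv (R : realType) (S K W V : finType) (r : S -> {ffun K -> W} * V)
    (r_bij : bijective r) (t : nat) (e1 e2 : fmeasure R W) :
  @Tmom R S t (layer_measure r (conv e1 e2)) =
  op_mul (@Tmom R S t (layer_measure r e1)) (@Tmom R S t (layer_measure r e2)).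
Proof.
rewrite !Tmom_layer_measure Tmom_conv tensor_op_mul //.
exact: regroup_bij.
Qed.

Lemma inj_surj_bij (T T' : finType) (f : T -> T') :
  injective f -> (forall y, exists x, f x = y) -> bijective f.
Proof. by move=> f_inj /fin_all_exists[g fgK]; exists g => //; apply: inj_can_sym. Qed.

Lemma nextnE n (i : 'I_n) : (i.+1 < n)%N -> val (nextn i) = i.+1.
Proof. by move=> lt_i1_n; rewrite /nextn val_insubd lt_i1_n. Qed.

Section BrickLayer.
Variables (n d : nat) (K : finType) (left : K -> 'I_n).
Hypotheses (left_inj : injective left) (left_lt : forall k, ((left k).+1 < n)%N).
Hypothesis left_parity : forall k k', odd (left k) = odd (left k').

Definition covered (i : 'I_n) : bool := [exists k, (left k == i) || (nextn (left k) == i)].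

Definition layer_split (z : qconf n d) :
    {ffun K -> qq d} * {ffun {i | ~~ covered i} -> 'I_d} :=
  ([ffun k => (z (left k), z (nextn (left k)))], [ffun s => z (val s)]).

Lemma left_neq_right k k' : left k <> nextn (left k').
Proof.
by move=> E; have := left_parity k k'; rewrite E nextnE //=; case: (odd (left k')).
Qed.

Lemma right_inj : injective (fun k => nextn (left k)).
Proof.
move=> k k' E; apply: left_inj; apply: val_inj; apply: succn_inj.
by rewrite -(nextnE (left_lt k)) -(nextnE (left_lt k')) E.
Qed.

Lemma layer_split_inj : injective layer_split.
Proof.
move=> x y [/ffunP xy_pairs /ffunP xy_idle]; apply/ffunP => i.
case: (boolP (covered i)) => [/existsP[k /orP[]/eqP <-]|i_idle].
- by have := xy_pairs k; rewrite !ffunE => -[].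
- by have := xy_pairs k; rewrite !ffunE => -[].
by have := xy_idle (exist _ i i_idle); rewrite !ffunE.
Qed.

Lemma layer_split_surj y : exists z, layer_split z = y.
Proof.
case: y => g h.
have site_value (i : 'I_n) : exists a : 'I_d,
    (forall s : {i | ~~ covered i}, val s = i -> h s = a) /\
    (forall k, left k = i -> (g k).1 = a) /\ (forall k, nextn (left k) = i -> (g k).2 = a).
  case: (boolP (covered i)) => [i_cov|i_idle]; last first.
    have i_free k : (left k != i) && (nextn (left k) != i).
      by have := i_idle; rewrite negb_exists => /forallP/(_ k); rewrite negb_or.
    exists (h (exist _ i i_idle)); split; last split.
    - by move=> s si; rewrite (_ : s = exist _ i i_idle) //; apply: val_inj.
    - by move=> k ki; have := i_free k; rewrite ki eqxx.
    - by move=> k ki; have := i_free k; rewrite ki eqxx andbF.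
  have s_neq_i (s : {i | ~~ covered i}) : val s <> i.
    by move=> si; move: (valP s); rewrite si i_cov.
  case/existsP: i_cov => k /orP[]/eqP ik.
  - exists (g k).1; split; last split.
    + by move=> s /s_neq_i.
    + by move=> k' k'i; rewrite (left_inj (etrans k'i (esym ik))).
    + by move=> k' k'i; case: (left_neq_right (etrans ik (esym k'i))).
  - exists (g k).2; split; last split.
    + by move=> s /s_neq_i.
    + by move=> k' k'i; case: (left_neq_right (etrans k'i (esym ik))).
    + by move=> k' k'i; rewrite (right_inj (etrans k'i (esym ik))).
have [z zP] := fin_all_exists site_value.
exists [ffun i => z i]; congr (_, _); apply/ffunP.
  move=> k; rewrite !ffunE [g k]surjective_pairing.
  congr (_, _); symmetry; first by case: (zP (left k)) => _ [->].
  by case: (zP (nextn (left k))) => _ [_ ->].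
by move=> s; rewrite !ffunE; symmetry; case: (zP (val s)) => -> .
Qed.

Lemma layer_split_bij : bijective layer_split.
Proof. exact: inj_surj_bij layer_split_inj layer_split_surj. Qed.

End BrickLayer.

Section Brickwork.
Variables (R : realType) (n d : nat).

Definition layerA_split := @layer_split n d (pairA n) (fun p => val p).
Definition layerB_split := @layer_split n d (pairB n) (fun p => val p).

Lemma layerA_split_bij : bijective layerA_split.
Proof.
apply: layer_split_bij; first exact: val_inj; first by move=> p; case/andP: (valP p).
by move=> p p'; case/andP: (valP p) => /negPf -> _; case/andP: (valP p') => /negPf.
Qed.

Lemma layerB_split_bij : bijective layerB_split.
Proof.
apply: layer_split_bij; first exact: val_inj; first by move=> p; case/andP: (valP p).
by move=> p p'; case/andP: (valP p) => -> _; case/andP: (valP p') => ->.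
Qed.

Lemma layerB_tensor_op : @layerB R n d = tensor_op layerB_split.
Proof.
apply: funext => u; apply: funext => x; apply: funext => y.
rewrite /layerB /tensor_op /layerB_split /layer_split /=; congr (_ * _).
  by apply: eq_bigr => p _; rewrite !ffunE.
rewrite -[RHS]prod_eq_ffun (reindex_omap (val : {i | idleB i} -> 'I_n) insub).
  apply: eq_big => [[i i_idle]|[i i_idle] _] /=; last by rewrite !ffunE.
  by rewrite i_idle insubT /= eqxx.
by move=> i i_idle; rewrite insubT.
Qed.

Hypothesis n_even : ~~ odd n.

Lemma layerA_covers (i : 'I_n) : covered (fun p : pairA n => val p) i.
Proof.
apply/existsP; case: (boolP (odd i)) => i_odd.
  have i_gt0 : (0 < i)%N by case: (nat_of_ord i) i_odd.
  have lt_i1_n : (i.-1 < n)%N := leq_ltn_trans (leq_pred _) (ltn_ord i).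
  have p_pairA : ~~ odd (Ordinal lt_i1_n) && ((Ordinal lt_i1_n).+1 < n)%N.
    by rewrite /= prednK // ltn_ord andbT; move: i_odd; rewrite -(prednK i_gt0) /=.
  exists (exist _ (Ordinal lt_i1_n) p_pairA); apply/orP; right; apply/eqP/val_inj.
  by rewrite nextnE /= ?prednK //; case/andP: p_pairA.
have lt_i1_n : (i.+1 < n)%N.
  rewrite ltn_neqAle ltn_ord andbT; apply: contraNneq n_even => <-.
  by rewrite /= i_odd.
have p_pairA : ~~ odd i && (i.+1 < n)%N by rewrite i_odd lt_i1_n.
by exists (exist _ i p_pairA); rewrite eqxx.
Qed.

Lemma layerA_tensor_op : @layerA R n d = tensor_op layerA_split.
Proof.
apply: funext => u; apply: funext => x; apply: funext => y.
rewrite /layerA /tensor_op /layerA_split /layer_split /=.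
rewrite [_ == _](introT eqP) ?mulr1; first by apply: eq_bigr => p _; rewrite !ffunE.
by apply/ffunP => [[i i_idle]]; have := i_idle; rewrite layerA_covers.
Qed.

Lemma nu_par_layers (e : fmeasure R (qq d)) :
  @nu_par R n d e =
  scale_measure 2^-1 (layer_measure layerA_split e) ++
  scale_measure 2^-1 (layer_measure layerB_split e).
Proof.
by rewrite /nu_par layerA_tensor_op layerB_tensor_op /scale_measure /layer_measure -!map_comp.
Qed.

End Brickwork.

Theorem lemma6 (R : realType) (n d : nat) (G : seq (Op R (qq d)))
    (t : nat) (P : Op R (tidx (qconf n d) t)) :
  ~~ odd n ->
  G <> [::] -> List.NoDup G -> (forall g, List.In g G -> unitary g) ->
  (0 < t)%N ->
  haar_moment P ->
  gap P (conv (@nu_par R n d (unif G)) (@nu_par R n d (unif [seq op_adj g | g <- G])))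
  >= 2^-1 * gap P (@nu_par R n d (conv (unif G) (unif [seq op_adj g | g <- G]))).
Proof.
(* Neither [List.NoDup G] nor [0 < t] is needed. *)
move=> n_even G_neq0 _ G_unitary _ P_haar.
have G_prob : unitary_prob (unif G) by apply: unif_prob.
have G'_prob : unitary_prob (unif [seq op_adj g | g <- G]).
  apply: unif_prob; first by case: (G) G_neq0.
  by move=> _ /List.in_map_iff[g [<- /G_unitary/unitary_adj]].
have AG := layer_measure_prob (layerA_split_bij n d) G_prob.
have BG := layer_measure_prob (layerB_split_bij n d) G_prob.
have AG' := layer_measure_prob (layerA_split_bij n d) G'_prob.
have BG' := layer_measure_prob (layerB_split_bij n d) G'_prob.
rewrite /gap !nu_par_layers // Tmom_conv !Tmom_avg.
rewrite (Tmom_layer_conv (layerA_split_bij n d)) (Tmom_layer_conv (layerB_split_bij n d)).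
have := opnorm_avg_mul (haar_moment_orth_proj P_haar)
  (Tmom_contraction AG) (Tmom_contraction BG) (Tmom_contraction AG') (Tmom_contraction BG')
  (Tmom_fixes_range P_haar AG) (Tmom_fixes_range P_haar BG)
  (Tmom_fixes_range P_haar AG') (Tmom_fixes_range P_haar BG').
lra.
Qed.
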